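(* There is an absolute constant $C \in \mathbb{N}$ such that for every odd integer $n \ge 1$ there exists a $C$-Lipschitz mapping $\psi\colon\{0,1\}^n\to\{0,1\}^n$ from ${\sf Majority}$ to ${\sf Dictator}$; that is, $\psi$ is a bijection, ${\sf Majority}(z) = \psi(z)_1$ for every $z\in\{0,1\}^n$, and ${\sf dist}(\psi(x),\psi(y)) \le C\,{\sf dist}(x,y)$ for all $x,y\in\{0,1\}^n$.
   Context: ${\sf dist}$ denotes Hamming distance. ${\sf Majority}\colon\{0,1\}^n\to\{0,1\}$ is defined by ${\sf Majority}(x)=1$ if $\sum_{i=1}^n x_i > n/2$ and $0$ otherwise. ${\sf Dictator}(x)=x_1$. Given $f,g\colon\{0,1\}^n\to\{0,1\}$, a mapping from $f$ to $g$ is a bijection $\psi\colon\{0,1\}^n\to\{0,1\}^n$ with $f(z)=g(\psi(z))$ for all $z$. A map $\phi$ is $C$-Lipschitz if ${\sf dist}(\phi(x),\phi(y))\le C\,{\sf dist}(x,y)$ for all $x,y$. *)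

(* The hypercube {0,1}^n is modelled as n.-tuple bool
   (coordinate i, 1-based in the paper, is index i-1 here). *)
From mathcomp Require Import all_boot.
Set Implicit Arguments. Unset Strict Implicit. Unset Printing Implicit Defensive.

Definition dist (n : nat) (x y : n.-tuple bool) : nat :=
  #|[set i : 'I_n | tnth x i != tnth y i]|.

Definition Majority (n : nat) (x : n.-tuple bool) : bool :=
  n < 2 * count id x.

(* Dictator(x) = x_1 (first coordinate; false is a dummy default for n = 0) *)
Definition Dictator (n : nat) (x : n.-tuple bool) : bool := nth false x 0.

Definition is_mapping (n : nat) (f g : n.-tuple bool -> bool)
  (psi : n.-tuple bool -> n.-tuple bool) : Prop :=
  bijective psi /\ forall z, f z = g (psi z).

Definition Lipschitz (n : nat) (C : nat) (phi : n.-tuple bool -> n.-tuple bool) : Prop :=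
  forall x y, dist (phi x) (phi y) <= C * dist x y.

From mathcomp Require Import all_boot all_order all_algebra zify.
Import Order.TTheory GRing.Theory Num.Theory.
Set Implicit Arguments. Unset Strict Implicit. Unset Printing Implicit Defensive.

(* Write x = (b, y) and read y, of even length N, as a walk with a down-step for each 1.
   Matching every up-step with the first later down-step back to its level, as with brackets,
   leaves unmatched down-steps, all before the unmatched up-steps; the walk of the matched steps
   alone is nonnegative and vanishes at the unmatched steps.  Rewriting the unmatched steps as t
   down-steps followed by up-steps therefore keeps the set of unmatched steps, and y can be
   recovered from the result, t and the endpoint of its walk.  psi x puts Majority x first and
   rewrites y with t read off from the excess s = walk N - b, whose sign is Majority x and whose
   parity is b; so psi is injective, hence bijective.  Flipping one bit of x shifts the rest of
   the walk by 2, which changes the unmatched set in at most 8 places (running minima near the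
   old minimum) and s by at most 2; this bounds the change of psi x by 28 coordinates. *)

Definition walk (y : nat -> bool) (k : nat) : int := (k%:Z - 2 * (count y (iota 0 k))%:Z)%R.

Lemma walkS y k : walk y k.+1 = (walk y k + (if y k then -1 else 1))%R.
Proof.
rewrite /walk -addn1 iotaD count_cat /= addn0.
case: (y k) => /=; lia.
Qed.

Lemma walk0 y : walk y 0 = 0%R.
Proof. by []. Qed.

Lemma eq_in_walk y z k : (forall i, i < k -> y i = z i) -> walk y k = walk z k.
Proof.
move=> eq_yz; rewrite /walk; congr (_ - 2 * (Posz _))%R.
by apply: eq_in_count => i; rewrite mem_iota add0n => /andP[_ /eq_yz].
Qed.

Section Matching.
Variables (y : nat -> bool) (N : nat).
Local Notation W := (walk y).

Fixpoint prefix_min (k : nat) : int :=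
  if k is k'.+1 then (if (W k < prefix_min k')%R then W k else prefix_min k') else 0%R.

Lemma prefix_min_le k m : m <= k -> (prefix_min k <= W m)%R.
Proof.
elim: k m => [|k IH] m; first by rewrite leqn0 => /eqP ->.
rewrite leq_eqVlt => /orP[/eqP ->|/IH] /=; case: ifP; lia.
Qed.

Lemma prefix_min_attained k : exists2 m, m <= k & W m = prefix_min k.
Proof.
elim: k => [|k [m le_mk Wm]]; first by exists 0.
by rewrite /=; case: ifP => _; [exists k.+1 | exists m => //; apply: leqW].
Qed.

Fixpoint suffix_min_from (d k : nat) : int :=
  if d is d'.+1 then (if (W k < suffix_min_from d' k.+1)%R then W k else suffix_min_from d' k.+1)
  else W k.

Lemma suffix_min_from_le d k m : k <= m <= k + d -> (suffix_min_from d k <= W m)%R.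
Proof.
elim: d k => [|d IH] k; first by rewrite addn0 -eqn_leq => /eqP ->.
move=> /andP[le_km le_m] /=.
case: (ltngtP k m) le_km => // [lt_km|<-] _; last by case: ifP; lia.
have := IH k.+1; rewrite lt_km addSnnS le_m => /(_ isT); case: ifP; lia.
Qed.

Lemma suffix_min_from_attained d k :
  exists2 m, k <= m <= k + d & W m = suffix_min_from d k.
Proof.
elim: d k => [|d IH] k; first by exists k; rewrite ?addn0 ?leqnn.
have [m /andP[le_km le_m] Wm] := IH k.+1.
rewrite /=; case: ifP => _; first by exists k; rewrite ?leqnn ?leq_addr.
by exists m => //; lia.
Qed.

Definition suffix_min k := suffix_min_from (N - k) k.

Lemma suffix_min_le k m : k <= m <= N -> (suffix_min k <= W m)%R.
Proof. by move=> /andP[le_km le_mN]; apply: suffix_min_from_le; lia. Qed.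

Lemma suffix_min_attained k : k <= N -> exists2 m, k <= m <= N & W m = suffix_min k.
Proof.
move=> le_kN; have [m range_m Wm] := suffix_min_from_attained (N - k) k.
by exists m => //; move: range_m; lia.
Qed.

Lemma suffix_minS k : k < N ->
  suffix_min k = if (W k < suffix_min k.+1)%R then W k else suffix_min k.+1.
Proof. by move=> lt_kN; rewrite /suffix_min; have -> : N - k = (N - k.+1).+1 by lia. Qed.

Lemma suffix_minN : suffix_min N = W N.
Proof. by rewrite /suffix_min subnn. Qed.

(* Matching up-steps with later down-steps like brackets, step i is an unmatched down-step iff
   it reaches a new strict minimum, and an unmatched up-step iff it starts from a strict
   minimum of the rest of the walk. *)
Definition unmatched_down i := all (fun m => W i.+1 < W m)%R (iota 0 i.+1).
Definition unmatched_up i := all (fun m => W i < W m)%R (iota i.+1 (N - i)).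
Definition unmatched i := unmatched_down i || unmatched_up i.

Lemma unmatched_downP i :
  reflect (forall m, m <= i -> (W i.+1 < W m)%R) (unmatched_down i).
Proof.
by apply: (iffP allP) => lt_all m range_m; apply: lt_all; rewrite mem_iota /= in range_m *.
Qed.

Lemma unmatched_upP i : i <= N ->
  reflect (forall m, i < m <= N -> (W i < W m)%R) (unmatched_up i).
Proof.
by move=> le_iN; apply: (iffP allP) => lt_all m range_m; apply: lt_all; rewrite mem_iota in range_m *; lia.
Qed.

Lemma unmatched_downE i : unmatched_down i = (W i.+1 < prefix_min i)%R.
Proof.
apply/unmatched_downP/idP => [lt_all|lt_min m /prefix_min_le]; last lia.
by have [m le_mi <-] := prefix_min_attained i; apply: lt_all.
Qed.

Lemma unmatched_upE i : i < N -> unmatched_up i = (W i < suffix_min i.+1)%R.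
Proof.
move=> lt_iN; apply/(unmatched_upP (ltnW lt_iN))/idP => [lt_all|lt_min m range_m].
  by have [m range_m <-] := suffix_min_attained lt_iN; apply: lt_all; lia.
by have := @suffix_min_le i.+1 m; lia.
Qed.

Lemma unmatched_down_bit i : unmatched_down i -> y i.
Proof.
by move/unmatched_downP/(_ i (leqnn i)); rewrite walkS; case: (y i) => //; lia.
Qed.

Lemma unmatched_up_bit i : i < N -> unmatched_up i -> ~~ y i.
Proof.
move=> lt_iN /(unmatched_upP (ltnW lt_iN))/(_ i.+1).
by rewrite walkS ltnSn lt_iN; case: (y i) => // /(_ isT); lia.
Qed.

Lemma unmatched_down_up_disjoint i : i < N -> ~~ (unmatched_down i && unmatched_up i).
Proof.
move=> lt_iN; apply/negP => /andP[/unmatched_down_bit y_i /(unmatched_up_bit lt_iN)].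
by rewrite y_i.
Qed.

Lemma unmatched_down_before_up i k :
  i < N -> unmatched_down i -> unmatched_up k -> i < k.
Proof.
move=> lt_iN down_i up_k; rewrite ltnNge; apply/negP => le_ki.
have le_kN : k <= N by lia.
have [lt_ki|eq_ki] : k < i \/ k = i by lia.
  move/unmatched_downP: down_i => /(_ k (ltnW lt_ki)).
  by move/(unmatched_upP le_kN): up_k => /(_ i.+1); lia.
by move: (unmatched_down_up_disjoint lt_iN); rewrite down_i -eq_ki up_k.
Qed.

Lemma count_unmatched_down k :
  ((count unmatched_down (iota 0 k))%:Z = - prefix_min k)%R.
Proof.
elim: k => [|k IH] //.
rewrite -addn1 iotaD count_cat /= addn0 unmatched_downE addn1 /= add0n.
have := walkS y k; have := prefix_min_le (leqnn k).
by case: (ltrP (W k.+1) (prefix_min k)) => /=; case: (y k); lia.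
Qed.

Lemma count_unmatched_up k : k <= N ->
  ((count unmatched_up (iota k (N - k)))%:Z = W N - suffix_min k)%R.
Proof.
move=> le_kN; move def_d: (N - k) => d; elim: d k le_kN def_d => [|d IH] k le_kN def_d.
  have -> : k = N by lia.
  by rewrite suffix_minN subrr.
have lt_kN : k < N by lia.
rewrite /= unmatched_upE // (suffix_minS lt_kN) PoszD IH; [|lia|lia].
have := @suffix_min_le k.+1 k.+1; rewrite leqnn lt_kN => /(_ isT).
by rewrite walkS; case: (ltrP (W k) (suffix_min k.+1)) => /=; case: (y k); lia.
Qed.

Lemma prefix_min_N_split k : k <= N ->
  [/\ (prefix_min N <= prefix_min k)%R, (prefix_min N <= suffix_min k)%R &
      prefix_min N = prefix_min k \/ prefix_min N = suffix_min k].
Proof.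
move=> le_kN; split.
- by have [m le_mk <-] := prefix_min_attained k; apply: prefix_min_le; lia.
- by have [m range_m <-] := suffix_min_attained le_kN; apply: prefix_min_le; lia.
have [m le_mN Wm] := prefix_min_attained N.
case: (leqP m k) => [le_mk|lt_km].
  left; have := prefix_min_le le_mk; have [m' le_m'k <-] := prefix_min_attained k.
  by have := @prefix_min_le N m'; lia.
right; have := @suffix_min_le k m; rewrite (ltnW lt_km) le_mN => /(_ isT).
by have [m' range_m' <-] := suffix_min_attained le_kN; have := @prefix_min_le N m'; lia.
Qed.

Lemma suffix_min0 : suffix_min 0 = prefix_min N.
Proof.
have [_ le_min _] := prefix_min_N_split (leq0n N).
have [m le_mN Wm] := prefix_min_attained N; have := @suffix_min_le 0 m; rewrite le_mN.
by move=> /(_ isT); lia.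
Qed.

Lemma walkN_eq_count_unmatched :
  (W N = (count unmatched_up (iota 0 N))%:Z - (count unmatched_down (iota 0 N))%:Z)%R.
Proof.
have := count_unmatched_up (leq0n N); rewrite subn0 suffix_min0.
by have := count_unmatched_down N; lia.
Qed.

Definition unmatched_walk k : int :=
  ((count unmatched_up (iota 0 k))%:Z - (count unmatched_down (iota 0 k))%:Z)%R.
Definition matched_walk k : int := (W k - unmatched_walk k)%R.

Lemma unmatched_walkE k : k <= N ->
  unmatched_walk k = (suffix_min k - prefix_min N + prefix_min k)%R.
Proof.
move=> le_kN; rewrite /unmatched_walk count_unmatched_down.
have := count_unmatched_up le_kN; have := count_unmatched_up (leq0n N).
rewrite suffix_min0 subn0 -[in iota 0 N](subnKC le_kN) iotaD add0n count_cat; lia.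
Qed.

Lemma unmatched_walkS i : unmatched_walk i.+1 =
  (unmatched_walk i + (unmatched_up i)%:Z - (unmatched_down i)%:Z)%R.
Proof.
rewrite /unmatched_walk -addn1 !iotaD !count_cat /= !addn0 !PoszD add0n.
set a := Posz (count _ _); set b := Posz (count _ _); lia.
Qed.

Lemma matched_walk_ge0 k : k <= N -> (0 <= matched_walk k)%R.
Proof.
move=> le_kN; rewrite /matched_walk unmatched_walkE //.
have [? ? ?] := prefix_min_N_split le_kN; have := prefix_min_le (leqnn k).
by have := @suffix_min_le k k; rewrite leqnn le_kN => /(_ isT); lia.
Qed.

Lemma matched_walkN : matched_walk N = 0%R.
Proof.
rewrite /matched_walk unmatched_walkE // suffix_minN.
have [? ? ?] := prefix_min_N_split (leqnn N); have := prefix_min_le (leqnn N); lia.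
Qed.

Lemma matched_walk_unmatched i : i < N -> unmatched i -> matched_walk i = 0%R.
Proof.
move=> lt_iN un_i; rewrite /matched_walk unmatched_walkE ?(ltnW lt_iN) //.
have [? ? min_N] := prefix_min_N_split (ltnW lt_iN).
have pmin_i := prefix_min_le (leqnn i).
have := @suffix_min_le i i; rewrite leqnn (ltnW lt_iN) => /(_ isT) smin_i.
have attained : prefix_min i = W i \/ suffix_min i = W i.
  case/orP: un_i => [|]; last first.
    by rewrite unmatched_upE // => lt_min; right; rewrite suffix_minS ?lt_min.
  rewrite unmatched_downE => lt_min; left.
  by have := walkS y i; case: (y i) => WS; rewrite WS in lt_min; lia.
by case: min_N; case: attained; lia.
Qed.

Lemma matched_walkS_unmatched i : i < N -> unmatched i -> matched_walk i.+1 = matched_walk i.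
Proof.
move=> lt_iN; rewrite /matched_walk unmatched_walkS walkS /unmatched.
have := unmatched_down_up_disjoint lt_iN.
case down_i: (unmatched_down i); case up_i: (unmatched_up i) => //= _ _.
  by rewrite (unmatched_down_bit down_i); set w := W i; set s := unmatched_walk i; lia.
by rewrite (negbTE (unmatched_up_bit lt_iN up_i)); set w := W i; set s := unmatched_walk i; lia.
Qed.

Lemma matched_walkS_matched i : ~~ unmatched i ->
  matched_walk i.+1 = (matched_walk i + (if y i then -1 else 1))%R.
Proof.
rewrite /unmatched negb_or => /andP[/negbTE not_down /negbTE not_up].
rewrite /matched_walk unmatched_walkS walkS not_down not_up.
by case: (y i); set w := W i; set s := unmatched_walk i; lia.
Qed.

Definition rank k := count unmatched (iota 0 k).

Lemma rankS k : rank k.+1 = rank k + unmatched k.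
Proof. by rewrite /rank -addn1 iotaD count_cat /= addn0. Qed.

Lemma leq_rank m k : m <= k -> rank m <= rank k.
Proof. by move=> le_mk; rewrite /rank -(subnKC le_mk) iotaD count_cat leq_addr. Qed.

Lemma ltn_rank i k : unmatched i -> i < k -> rank i < rank k.
Proof. by move=> un_i lt_ik; have := leq_rank lt_ik; rewrite rankS un_i; lia. Qed.

Lemma rankN : ((rank N)%:Z = W N + 2 * (count unmatched_down (iota 0 N))%:Z)%R.
Proof.
have disjoint : count (predI unmatched_down unmatched_up) (iota 0 N) = 0.
  apply/eqP; rewrite -leqn0 leqNgt -has_count; apply/hasP => -[i].
  by rewrite mem_iota => /andP[_ lt_iN]; apply/negP/unmatched_down_up_disjoint.
have -> : rank N = count unmatched_down (iota 0 N) + count unmatched_up (iota 0 N).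
  by rewrite -count_predUI disjoint addn0.
rewrite PoszD walkN_eq_count_unmatched; lia.
Qed.

Lemma matched_zero_before k rho : k <= N -> rho <= rank k ->
  exists m, [/\ m <= k, rank m = rho & matched_walk m = 0%R].
Proof.
elim: k rho => [|k IH] rho le_kN; first by rewrite leqn0 => /eqP ->; exists 0.
rewrite rankS; case un_k: (unmatched k) => /=; last first.
  by rewrite addn0 => /(IH rho (ltnW le_kN))[m [le_mk ? ?]]; exists m; split => //; apply: leqW.
rewrite addn1 leq_eqVlt => /orP[/eqP ->|/(IH rho (ltnW le_kN))[m [le_mk ? ?]]].
  by exists k.+1; rewrite rankS un_k addn1 matched_walkS_unmatched // matched_walk_unmatched.
by exists m; split => //; apply: leqW.
Qed.

Lemma matched_zero_after k rho : k <= N -> rank k <= rho <= rank N ->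
  exists m, [/\ k <= m <= N, rank m = rho & matched_walk m = 0%R].
Proof.
move=> le_kN; move def_d: (N - k) => d; elim: d k le_kN def_d => [|d IH] k le_kN def_d.
  have eq_kN : k = N by lia.
  rewrite eq_kN -eqn_leq => /eqP <-; exists N.
  by rewrite leqnn matched_walkN.
move=> /andP[le_rho rho_le]; have lt_kN : k < N by lia.
case: (leqP (rank k.+1) rho) => [le_rho'|].
  have [|m [? ? ?]] := IH k.+1 lt_kN ltac:(lia); first by rewrite le_rho'.
  by exists m; split => //; lia.
rewrite rankS; case un_k: (unmatched k) => /= ?; last lia.
by exists k; split; [lia | lia | exact: matched_walk_unmatched].
Qed.

End Matching.

(* The walk of [t] down-steps followed by up-steps, after [r] steps. *)
Definition vee_walk (t r : nat) : int := (r%:Z - 2 * (minn r t)%:Z)%R.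

Definition rematch y N t : nat -> bool :=
  fun i => if unmatched y N i then rank y N i < t else y i.

Lemma walk_rematch y N t k : k <= N ->
  walk (rematch y N t) k = (matched_walk y N k + vee_walk t (rank y N k))%R.
Proof.
elim: k => [|k IH] le_kN; first by rewrite /vee_walk /= min0n.
rewrite walkS IH ?(ltnW le_kN) // rankS /rematch.
case un_k: (unmatched y N k).
  rewrite matched_walkS_unmatched // /vee_walk addn1.
  by case: (ltnP (rank y N k) t); set h := matched_walk y N k; lia.
rewrite matched_walkS_matched ?un_k // addn0.
by case: (y k); set h := matched_walk y N k; set f := vee_walk _ _; lia.
Qed.

Section Rematch.
Variables (y : nat -> bool) (N t : nat).
Hypothesis le_t_rank : t <= rank y N N.
Local Notation y' := (rematch y N t).

Lemma unmatched_down_rematch i : i < N ->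
  unmatched_down y' i = unmatched y N i && (rank y N i < t).
Proof.
move=> lt_iN; have Wy' := @walk_rematch y N t.
apply/unmatched_downP/idP => [down_i|/andP[un_i lt_rank] m le_mi]; last first.
  rewrite !Wy' ?(leq_trans le_mi (ltnW lt_iN)) // rankS un_i.
  rewrite matched_walkS_unmatched // matched_walk_unmatched //.
  have := @matched_walk_ge0 y N m (leq_trans le_mi (ltnW lt_iN)).
  by have := leq_rank y N le_mi; rewrite /vee_walk; set h := matched_walk _ _ _; lia.
apply/negPn/negP => not_down.
have [m [le_mi rank_m zero_m]] :=
  @matched_zero_before y N i (minn (rank y N i) t) (ltnW lt_iN) (geq_minl _ _).
have := down_i m le_mi; rewrite !Wy' ?(leq_trans le_mi (ltnW lt_iN)) // zero_m rank_m.
have -> : vee_walk t (minn (rank y N i) t) = (- (minn (rank y N i) t)%:Z)%R.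
  by rewrite /vee_walk; lia.
rewrite rankS; case un_i: (unmatched y N i) not_down => /= not_down.
  rewrite matched_walkS_unmatched // matched_walk_unmatched // /vee_walk.
  by move: not_down; rewrite -leqNgt; lia.
have := @matched_walk_ge0 y N i.+1 lt_iN; rewrite addn0 /vee_walk.
by set h := matched_walk _ _ _; lia.
Qed.

Lemma unmatched_up_rematch i : i < N ->
  unmatched_up y' N i = unmatched y N i && ~~ (rank y N i < t).
Proof.
move=> lt_iN; have Wy' := @walk_rematch y N t.
apply/(unmatched_upP _ (ltnW lt_iN))/idP => [up_i|/andP[un_i ge_rank] m range_m]; last first.
  rewrite !Wy' ?(ltnW lt_iN) //; last by lia.
  rewrite matched_walk_unmatched //.
  have := @matched_walk_ge0 y N m ltac:(lia); have := @leq_rank y N i.+1 m ltac:(lia).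
  move: ge_rank; rewrite rankS un_i -leqNgt /vee_walk; set h := matched_walk _ _ _; lia.
apply/negPn/negP => not_up.
have [|m [range_m rank_m zero_m]] := @matched_zero_after y N i.+1 (maxn (rank y N i.+1) t) lt_iN.
  by rewrite leq_maxl geq_max le_t_rank leq_rank.
have := up_i m ltac:(lia); rewrite !Wy' ?(ltnW lt_iN) //; last by lia.
rewrite zero_m rank_m.
have -> : vee_walk t (maxn (rank y N i.+1) t) = ((maxn (rank y N i.+1) t)%:Z - 2 * t%:Z)%R.
  by rewrite /vee_walk; lia.
move: not_up; rewrite rankS; case un_i: (unmatched y N i) => /= not_up.
  by rewrite matched_walk_unmatched // /vee_walk; move: not_up; rewrite -ltnNge; lia.
have := @matched_walk_ge0 y N i (ltnW lt_iN); rewrite addn0 /vee_walk.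
by set h := matched_walk _ _ _; lia.
Qed.

Lemma unmatched_rematch i : i < N -> unmatched y' N i = unmatched y N i.
Proof.
move=> lt_iN; rewrite [unmatched y' N i]/unmatched.
rewrite unmatched_down_rematch // unmatched_up_rematch //.
by case: (unmatched y N i); case: (_ < t).
Qed.

Lemma rank_rematch k : k <= N -> rank y' N k = rank y N k.
Proof.
move=> le_kN; apply: eq_in_count => i; rewrite mem_iota => /andP[_ lt_ik].
by apply: unmatched_rematch; lia.
Qed.

Lemma count_unmatched_down_rematch : count (unmatched_down y') (iota 0 N) = t.
Proof.
have count_below k :
    count (fun i => unmatched y N i && (rank y N i < t)) (iota 0 k) = minn (rank y N k) t.
  elim: k => [|k IH]; first by rewrite /rank /= min0n.
  rewrite -addn1 iotaD count_cat IH /= addn0 add0n addn1 rankS.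
  by case: (unmatched y N k) => /=; case: ltnP; lia.
rewrite -[RHS](minn_idPr le_t_rank) -count_below.
apply: eq_in_count => i; rewrite mem_iota => /andP[_ lt_iN].
exact: unmatched_down_rematch.
Qed.

Lemma rematch_rematch a i : i < N -> rematch y' N a i = rematch y N a i.
Proof.
move=> lt_iN; rewrite {1}/rematch unmatched_rematch // rank_rematch ?(ltnW lt_iN) //.
by rewrite /rematch; case: (unmatched y N i).
Qed.

End Rematch.

Lemma rematch_id y N i :
  i < N -> rematch y N (count (unmatched_down y) (iota 0 N)) i = y i.
Proof.
move=> lt_iN; rewrite /rematch /unmatched.
have split_N : iota 0 N = iota 0 i ++ iota i (N - i) by rewrite -iotaD subnKC // ltnW.
case down_i: (unmatched_down y i) => /=.
  rewrite (unmatched_down_bit down_i); apply/esym.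
  have -> : rank y N i = count (unmatched_down y) (iota 0 i).
    apply: eq_in_count => k; rewrite mem_iota => /andP[_ lt_ki] /=.
    rewrite /unmatched; case up_k: (unmatched_up y N k); last by rewrite orbF.
    by have := unmatched_down_before_up lt_iN down_i up_k; lia.
  rewrite split_N count_cat; have -> : N - i = (N - i.+1).+1 by lia.
  by rewrite /= down_i; lia.
case up_i: (unmatched_up y N i) => //=.
rewrite (negbTE (unmatched_up_bit lt_iN up_i)); apply/negbTE; rewrite -leqNgt.
rewrite split_N count_cat.
have -> : count (unmatched_down y) (iota i (N - i)) = 0.
  apply/eqP; rewrite -leqn0 leqNgt -has_count; apply/hasP => -[k].
  rewrite mem_iota subnKC ?(ltnW lt_iN) // => /andP[le_ik lt_kN] down_k.
  by have := unmatched_down_before_up lt_kN down_k up_i; lia.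
by rewrite addn0; apply: sub_count => k /= down_k; rewrite /unmatched down_k.
Qed.

Section Agreement.
Variables (y z : nat -> bool) (N : nat).
Hypothesis eq_yz : forall i, i < N -> y i = z i.

Lemma eq_walk_le k : k <= N -> walk y k = walk z k.
Proof. by move=> le_kN; apply: eq_in_walk => i lt_ik; apply: eq_yz; lia. Qed.

Lemma eq_unmatched_down i : i < N -> unmatched_down y i = unmatched_down z i.
Proof.
move=> lt_iN; rewrite /unmatched_down eq_walk_le //.
by apply: eq_in_all => m; rewrite mem_iota => range_m; rewrite eq_walk_le //; lia.
Qed.

Lemma eq_unmatched_up i : i < N -> unmatched_up y N i = unmatched_up z N i.
Proof.
move=> lt_iN; rewrite /unmatched_up eq_walk_le ?(ltnW lt_iN) //.
by apply: eq_in_all => m; rewrite mem_iota => range_m; rewrite eq_walk_le //; lia.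
Qed.

Lemma eq_unmatched i : i < N -> unmatched y N i = unmatched z N i.
Proof. by move=> lt_iN; rewrite /unmatched eq_unmatched_down // eq_unmatched_up. Qed.

Lemma eq_rank k : k <= N -> rank y N k = rank z N k.
Proof.
move=> le_kN; apply: eq_in_count => i; rewrite mem_iota => range_i.
by apply: eq_unmatched; lia.
Qed.

Lemma eq_rematch t i : i < N -> rematch y N t i = rematch z N t i.
Proof. by move=> lt_iN; rewrite /rematch eq_unmatched // eq_rank ?(ltnW lt_iN) // eq_yz. Qed.

End Agreement.

Definition mismatches (f g : nat -> bool) n := count (fun i => f i != g i) (iota 0 n).

Lemma mismatches_triangle f g h n : mismatches f h n <= mismatches f g n + mismatches g h n.
Proof.
rewrite /mismatches; elim: (iota 0 n) => [|x s IH] //=.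
by case: (f x); case: (g x); case: (h x) => /=; lia.
Qed.

Lemma mismatchesC f g n : mismatches f g n = mismatches g f n.
Proof. by apply: eq_count => i; rewrite eq_sym. Qed.

Lemma mismatches_eq0 f g n : (forall i, i < n -> f i = g i) -> mismatches f g n = 0.
Proof.
move=> eq_fg; apply/eqP; rewrite -leqn0 leqNgt -has_count; apply/hasP => -[i].
by rewrite mem_iota add0n => /andP[_ /eq_fg ->]; rewrite eqxx.
Qed.

Lemma mismatches_le1 f g j n : (forall i, i != j -> f i = g i) -> mismatches f g n <= 1.
Proof.
move=> eq_fg; apply: (@leq_trans (count (pred1 j) (iota 0 n))).
  by apply: sub_count => i /=; apply: contraTT => ne_ij; rewrite negbK eq_fg // eqxx.
by rewrite count_uniq_mem ?iota_uniq //; case: (_ \in _).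
Qed.

Lemma count_le_mismatches (P Q : pred nat) s :
  count P s <= count Q s + count (fun i => P i != Q i) s.
Proof. by elim: s => [|x s IH] //=; case: (P x); case: (Q x) => /=; lia. Qed.

Lemma count_le_cover3 (P P1 P2 P3 : pred nat) s :
  (forall i, i \in s -> P i -> [|| P1 i, P2 i | P3 i]) ->
  count P s <= count P1 s + count P2 s + count P3 s.
Proof.
elim: s => [|x s IH] //= cover.
have := IH (fun i s_i => cover i ltac:(by rewrite inE s_i orbT)).
have := cover x (mem_head x s).
case: (P x) => /= [/(_ isT)|_]; last lia.
by case: (P1 x); case: (P2 x); case: (P3 x) => //= _; lia.
Qed.

Lemma count_le_window (P : pred nat) (g : nat -> int) (lo : int) (c : nat) (s : seq nat) :
  uniq s -> (forall i, i \in s -> P i -> (lo <= g i < lo + c%:Z)%R) ->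
  {in [pred i in s | P i] &, injective g} ->
  count P s <= c.
Proof.
move=> uniq_s window inj_g; rewrite -size_filter.
have uniq_img : uniq (map g (filter P s)).
  rewrite map_inj_in_uniq ?filter_uniq // => i i'; rewrite !mem_filter.
  by move=> /andP[Pi si] /andP[Pi' si']; apply: inj_g; rewrite inE ?si ?si' ?Pi ?Pi'.
rewrite -(size_map g) -(size_iota 0 c) -(size_map (fun k : nat => (lo + k%:Z)%R)).
apply: uniq_leq_size => // x /mapP[i]; rewrite mem_filter => /andP[Pi si] ->.
have /andP[lo_le lt_hi] := window i si Pi.
by apply/mapP; exists (absz (g i - lo)%R); rewrite ?mem_iota; lia.
Qed.

Lemma rank_le_mismatches y z N k : k <= N ->
  rank y N k <= rank z N k + mismatches (unmatched y N) (unmatched z N) N.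
Proof.
move=> le_kN; apply: leq_trans (count_le_mismatches _ (unmatched z N) _) _.
by rewrite leq_add2l /mismatches -(subnKC le_kN) iotaD count_cat leq_addr.
Qed.

(* Ranks of common unmatched steps differ by at most the number d of mismatches, so a rank
   threshold t versus t' can only split a window of 2 d + |t - t'| rank values. *)
Lemma count_rank_threshold_mismatches y z N t t' :
  count (fun i => [&& unmatched y N i, unmatched z N i & (rank y N i < t) != (rank z N i < t')])
    (iota 0 N)
  <= (t - t') + (t' - t) + 2 * mismatches (unmatched y N) (unmatched z N) N.
Proof.
set d := mismatches _ _ N.
apply: (@count_le_window _ (fun i => ((rank y N i)%:Z)%R) ((minn t t')%:Z - d%:Z)%R _ _ (iota_uniq 0 N)).
  move=> i; rewrite mem_iota add0n => /andP[_ lt_iN] /and3P[_ _ split_i].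
  have le_yz := rank_le_mismatches y z (ltnW lt_iN).
  have := rank_le_mismatches z y (ltnW lt_iN); rewrite mismatchesC -/d => le_zy.
  by move: split_i; case: (ltnP (rank y N i) t); case: (ltnP (rank z N i) t') => //= ? ? _; lia.
move=> i i'; rewrite !inE => /andP[_ /and3P[un_i _ _]] /andP[_ /and3P[un_i' _ _]] /eqP.
rewrite eqz_nat => /eqP eq_rank_ii'.
case: (ltngtP i i') => // [/(ltn_rank un_i)|/(ltn_rank un_i')]; lia.
Qed.

Lemma mismatches_rematch y z N t t' :
  mismatches (rematch y N t) (rematch z N t') N <=
  3 * mismatches (unmatched y N) (unmatched z N) N + mismatches y z N + ((t - t') + (t' - t)).
Proof.
apply: leq_trans (count_le_cover3 (P1 := fun i => unmatched y N i != unmatched z N i)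
  (P2 := fun i => y i != z i)
  (P3 := fun i => [&& unmatched y N i, unmatched z N i & (rank y N i < t) != (rank z N i < t')]) _) _.
  move=> i _; rewrite /rematch.
  by case: (unmatched y N i); case: (unmatched z N i) => //=; case: (y i); case: (z i).
by have := count_rank_threshold_mismatches y z N t t'; rewrite /mismatches; lia.
Qed.

Lemma eq_prefix_min y z k : (forall m, m <= k -> walk y m = walk z m) ->
  prefix_min y k = prefix_min z k.
Proof.
elim: k => [|k IH] eq_W //=.
by rewrite IH ?eq_W // => m le_mk; apply: eq_W; lia.
Qed.

Lemma suffix_min_from_shift y z d k (c : int) :
  (forall m, k <= m -> walk z m = (walk y m + c)%R) ->
  suffix_min_from z d k = (suffix_min_from y d k + c)%R.
Proof.
elim: d k => [|d IH] k shift /=; first exact: shift.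
rewrite IH => [|m le_km]; last by apply: shift; lia.
by rewrite shift // ltrD2r; case: ifP.
Qed.

Lemma unmatched_down_split y i j : j <= i ->
  unmatched_down y i = (walk y i.+1 < prefix_min y j)%R &&
    all (fun m => walk y i.+1 < walk y m)%R (iota j.+1 (i - j)).
Proof.
move=> le_ji; apply/unmatched_downP/andP => [down_i|[lt_min /allP lt_mid] m le_mi].
  split; first by have [m le_mj <-] := prefix_min_attained y j; apply: down_i; lia.
  by apply/allP => m; rewrite mem_iota => range_m; apply: down_i; lia.
case: (leqP m j) => [/(prefix_min_le y)|lt_jm]; first lia.
by apply: lt_mid; rewrite mem_iota; lia.
Qed.

Lemma unmatched_up_split y N i j : i <= j -> j < N ->
  unmatched_up y N i = all (fun m => walk y i < walk y m)%R (iota i.+1 (j - i)) &&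
    (walk y i < suffix_min y N j.+1)%R.
Proof.
move=> le_ij lt_jN; apply/(unmatched_upP _ (leq_trans le_ij (ltnW lt_jN)))/andP.
  move=> up_i; split; first by apply/allP => m; rewrite mem_iota => range_m; apply: up_i; lia.
  by have [m range_m <-] := suffix_min_attained y lt_jN; apply: up_i; lia.
move=> [/allP lt_mid lt_min] m range_m; case: (leqP m j) => le_mj.
  by apply: lt_mid; rewrite mem_iota; lia.
by have := @suffix_min_le y N j.+1 m; lia.
Qed.

Section Flip.
Variables (y z : nat -> bool) (j : nat).
Hypothesis flip_j : z j = ~~ y j.
Hypothesis eq_off_j : forall i, i != j -> y i = z i.

Definition flip_shift : int := if y j then 2%R else (-2)%R.

Lemma walk_flip k : walk z k = (walk y k + (if (j < k)%N then flip_shift else 0))%R.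
Proof.
elim: k => [|k IH] //; rewrite !walkS IH /flip_shift.
case: (ltngtP j k) => [lt_jk|lt_kj|<-]; last by rewrite ltnSn flip_j; case: (y j) => /=; lia.
  rewrite ltnS (ltnW lt_jk) (eq_off_j (i := k)); last by apply/eqP; lia.
  by case: (z k); case: (y j); lia.
rewrite ltnS leqNgt lt_kj /= (eq_off_j (i := k)); last by apply/eqP; lia.
by case: (z k); lia.
Qed.

Lemma walk_flip_le k : k <= j -> walk z k = walk y k.
Proof. by move=> le_kj; rewrite walk_flip ltnNge le_kj addr0. Qed.

Lemma walk_flip_gt k : j < k -> walk z k = (walk y k + flip_shift)%R.
Proof. by move=> lt_jk; rewrite walk_flip lt_jk. Qed.

Lemma unmatched_down_flip_window i : unmatched_down y i != unmatched_down z i ->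
  [/\ j <= i, all (fun m => walk y i.+1 < walk y m)%R (iota j.+1 (i - j)) &
      (prefix_min y j - 2 <= walk y i.+1 < prefix_min y j - 2 + 4%:Z)%R].
Proof.
move=> ne_i; have le_ji : j <= i.
  rewrite leqNgt; apply/negP => lt_ij; move: ne_i; rewrite /unmatched_down walk_flip_le //.
  rewrite (@eq_in_all _ (fun m => walk y i.+1 < walk z m)%R
                        (fun m => walk y i.+1 < walk y m)%R) ?eqxx //.
  by move=> m; rewrite mem_iota => range_m /=; rewrite walk_flip_le //; lia.
move: ne_i; rewrite !(unmatched_down_split _ le_ji) walk_flip_gt //.
rewrite -(@eq_prefix_min y z j) => [|m le_mj]; last by rewrite walk_flip_le.
rewrite (@eq_in_all _ (fun m => walk y i.+1 + flip_shift < walk z m)%R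
                      (fun m => walk y i.+1 < walk y m)%R); last first.
  by move=> m; rewrite mem_iota => range_m; rewrite walk_flip_gt ?ltrD2r //; lia.
case: (all _ _); rewrite ?andbF ?andbT // => ne_i; split => //.
move: ne_i; rewrite /flip_shift; set X := walk y i.+1; set P := prefix_min y j.
by case: (y j); case: (ltrP X P); case: ltrP => //= *; lia.
Qed.

Lemma unmatched_up_flip_window N i : j < N -> i < N ->
  unmatched_up y N i != unmatched_up z N i ->
  [/\ i <= j, all (fun m => walk y i < walk y m)%R (iota i.+1 (j - i)) &
      (suffix_min y N j.+1 - 2 <= walk y i < suffix_min y N j.+1 - 2 + 4%:Z)%R].
Proof.
move=> lt_jN lt_iN ne_i; have le_ij : i <= j.
  rewrite leqNgt; apply/negP => lt_ji; move: ne_i; rewrite /unmatched_up walk_flip_gt //.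
  rewrite (@eq_in_all _ (fun m => walk y i + flip_shift < walk z m)%R
                        (fun m => walk y i < walk y m)%R) ?eqxx //.
  by move=> m; rewrite mem_iota => range_m /=; rewrite walk_flip_gt ?ltrD2r //; lia.
move: ne_i; rewrite !(unmatched_up_split _ le_ij lt_jN) walk_flip_le //.
rewrite /suffix_min (@suffix_min_from_shift y z _ _ flip_shift) => [|m lt_jm]; last first.
  by rewrite walk_flip_gt.
rewrite (@eq_in_all _ (fun m => walk y i < walk z m)%R
                      (fun m => walk y i < walk y m)%R); last first.
  by move=> m; rewrite mem_iota => range_m /=; rewrite walk_flip_le //; lia.
case: (all _ _); rewrite ?andbF ?andbT //= => ne_i; split => //.
move: ne_i; rewrite /flip_shift; set X := walk y i; set Q := suffix_min_from y _ j.+1.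
by case: (y j); case: (ltrP X Q); case: ltrP => //= *; lia.
Qed.

Lemma mismatches_unmatched_down_flip N :
  mismatches (unmatched_down y) (unmatched_down z) N <= 4.
Proof.
apply: (@count_le_window _ (fun i => walk y i.+1) (prefix_min y j - 2)%R 4 _ (iota_uniq 0 N)).
  by move=> i _ /unmatched_down_flip_window[].
move=> i i'; rewrite !inE => /andP[_ /unmatched_down_flip_window[le_ji mid_i _]].
move=> /andP[_ /unmatched_down_flip_window[le_ji' mid_i' _]] eq_W.
case: (ltngtP i i') => // lt_ii'.
  by move/allP: mid_i' => /(_ i.+1); rewrite mem_iota eq_W => /(_ ltac:(lia)); lia.
by move/allP: mid_i => /(_ i'.+1); rewrite mem_iota eq_W => /(_ ltac:(lia)); lia.
Qed.

Lemma mismatches_unmatched_up_flip N : j < N ->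
  mismatches (unmatched_up y N) (unmatched_up z N) N <= 4.
Proof.
move=> lt_jN.
apply: (@count_le_window _ (fun i => walk y i) (suffix_min y N j.+1 - 2)%R 4 _ (iota_uniq 0 N)).
  by move=> i; rewrite mem_iota add0n => /andP[_ lt_iN] /(unmatched_up_flip_window lt_jN lt_iN)[].
move=> i i'; rewrite !inE !mem_iota !add0n => /andP[/andP[_ lt_iN] ne_i] /andP[/andP[_ lt_i'N] ne_i'].
have [le_ij mid_i _] := unmatched_up_flip_window lt_jN lt_iN ne_i.
have [le_i'j mid_i' _] := unmatched_up_flip_window lt_jN lt_i'N ne_i' => eq_W.
case: (ltngtP i i') => // lt_ii'.
  by move/allP: mid_i => /(_ i'); rewrite mem_iota eq_W => /(_ ltac:(lia)); lia.
by move/allP: mid_i' => /(_ i); rewrite mem_iota eq_W => /(_ ltac:(lia)); lia.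
Qed.

Lemma mismatches_unmatched_flip N : j < N ->
  mismatches (unmatched y N) (unmatched z N) N <= 8.
Proof.
move=> lt_jN; have le_down := mismatches_unmatched_down_flip N.
have le_up := mismatches_unmatched_up_flip lt_jN.
apply: leq_trans (@count_le_cover3 _ (fun i => unmatched_down y i != unmatched_down z i)
   (fun i => unmatched_up y N i != unmatched_up z N i) pred0 _ _) _.
  move=> i _; rewrite /unmatched.
  by case: (unmatched_down y i); case: (unmatched_down z i);
     case: (unmatched_up y N i); case: (unmatched_up z N i).
by rewrite count_pred0 addn0; rewrite /mismatches in le_down le_up; lia.
Qed.

End Flip.

Section RematchInj.
Variables (y1 y2 : nat -> bool) (N t1 t2 : nat).
Hypotheses (le_t1 : t1 <= rank y1 N N) (le_t2 : t2 <= rank y2 N N).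
Hypothesis eq_out : forall i, i < N -> rematch y1 N t1 i = rematch y2 N t2 i.

Lemma rematch_target_inj : t1 = t2.
Proof.
rewrite -(count_unmatched_down_rematch le_t1) -(count_unmatched_down_rematch le_t2).
by apply: eq_in_count => i; rewrite mem_iota add0n => /andP[_]; apply: eq_unmatched_down.
Qed.

Lemma rematch_inj : walk y1 N = walk y2 N -> forall i, i < N -> y1 i = y2 i.
Proof.
move=> eq_W i lt_iN.
have eq_rankN : rank y1 N N = rank y2 N N.
  apply: eq_in_count => k; rewrite mem_iota add0n => /andP[_ lt_kN].
  by rewrite -(unmatched_rematch le_t1) // -(unmatched_rematch le_t2) // (eq_unmatched eq_out).
have eq_down : count (unmatched_down y1) (iota 0 N) = count (unmatched_down y2) (iota 0 N).
  by have := rankN y1 N; have := rankN y2 N; rewrite eq_rankN eq_W; lia.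
rewrite -(rematch_id y1 lt_iN) -(rematch_id y2 lt_iN) eq_down.
rewrite -(rematch_rematch le_t1 _ lt_iN) -(rematch_rematch le_t2 _ lt_iN).
exact: eq_rematch.
Qed.

End RematchInj.

Lemma distE n (x x' : n.-tuple bool) :
  dist x x' = count (fun i => nth false x i != nth false x' i) (iota 0 n).
Proof.
rewrite /dist cardsE cardE /enum_mem size_filter -val_enum_ord count_map enumT.
by apply: eq_count => i /=; rewrite unfold_in /= !(tnth_nth false).
Qed.

Lemma dist_triangle n (a b c : n.-tuple bool) : dist a c <= dist a b + dist b c.
Proof. by rewrite !distE; apply: mismatches_triangle. Qed.

Lemma dist_eq0 n (x x' : n.-tuple bool) : dist x x' = 0 -> x = x'.
Proof.
move/eqP; rewrite cards_eq0 => /eqP diff0; apply: eq_from_tnth => i.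
by apply/eqP; apply: contraT => ne_i; move: (in_set0 i); rewrite -diff0 inE ne_i.
Qed.

Lemma dist_xx n (x : n.-tuple bool) : dist x x = 0.
Proof. by apply/eqP; rewrite cards_eq0; apply/eqP/setP => i; rewrite !inE eqxx. Qed.

Lemma lipschitz_of_neighbors n C (f : n.-tuple bool -> n.-tuple bool) :
  (forall x x' (p : 'I_n), (forall i, i != p -> tnth x i = tnth x' i) ->
     dist (f x) (f x') <= C) ->
  Lipschitz C f.
Proof.
move=> neighbors x x'; move: {2}(dist x x') (leqnn (dist x x')) => d.
elim: d x => [|d IH] x le_d.
  by move: le_d; rewrite leqn0 => /eqP/dist_eq0 ->; rewrite !dist_xx.
case: (set_0Vmem [set i | tnth x i != tnth x' i]) => [diff0|[p]].
  by rewrite (@dist_eq0 _ x x') ?dist_xx // /dist diff0 cards0.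
rewrite inE => ne_p.
pose x'' := [tuple if i == p then tnth x' i else tnth x i | i < n].
have closer : dist x'' x' < dist x x'.
  rewrite /dist; apply: proper_card; apply/properP; split.
    by apply/subsetP => i; rewrite !inE tnth_mktuple; case: (i =P p) => // _; rewrite eqxx.
  by exists p; rewrite !inE ?tnth_mktuple ?eqxx.
have step : dist (f x) (f x'') <= C.
  by apply: (neighbors _ _ p) => i ne_ip; rewrite tnth_mktuple (negbTE ne_ip).
have := IH x'' ltac:(lia); have := dist_triangle (f x) (f x'') (f x'); nia.
Qed.

Definition tail_bits (x : seq bool) : nat -> bool := fun i => nth false x i.+1.

Definition signed_excess n (x : n.-tuple bool) : int :=
  (walk (tail_bits x) n.-1 - (nth false x 0)%:Z)%R.

Definition down_target (s : int) : nat := if (s < 0)%R then (absz s).-1 else absz s.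

Definition psi n (x : n.-tuple bool) : n.-tuple bool :=
  [tuple if val i == 0 then (signed_excess x < 0)%R
         else rematch (tail_bits x) n.-1 (down_target (signed_excess x)) (val i).-1 | i < n].

Lemma nth_psi0 n (x : n.-tuple bool) : 0 < n -> nth false (psi x) 0 = (signed_excess x < 0)%R.
Proof. by move=> n_gt0; rewrite -(tnth_nth _ _ (Ordinal n_gt0)) tnth_mktuple. Qed.

Lemma nth_psiS n (x : n.-tuple bool) i : i.+1 < n ->
  nth false (psi x) i.+1 = rematch (tail_bits x) n.-1 (down_target (signed_excess x)) i.
Proof. by move=> lt_in; rewrite -(tnth_nth _ _ (Ordinal lt_in)) tnth_mktuple. Qed.

Lemma odd_half_pred n : odd n -> n.-1 = 2 * n./2.
Proof. by move=> odd_n; rewrite -{1}(odd_double_half n) odd_n -mul2n. Qed.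

Lemma count_head_tail (s : seq bool) N : size s = N.+1 ->
  count id s = nth false s 0 + count (tail_bits s) (iota 0 N).
Proof.
case: s => [|b s] //= [size_s]; congr (_ + _).
by rewrite -{1}(mkseq_nth false s) /mkseq count_map size_s.
Qed.

Lemma majority_excess n (x : n.-tuple bool) : odd n -> Majority x = (signed_excess x < 0)%R.
Proof.
move=> odd_n; rewrite /Majority /signed_excess /walk.
have size_x : size x = n.-1.+1 by rewrite size_tuple; case: n odd_n x.
have n_eq : n = (2 * n./2).+1 by rewrite -(odd_half_pred odd_n); case: n odd_n x size_x.
rewrite (count_head_tail size_x) (odd_half_pred odd_n).
by move: (count _ _) => c; case: (nth false x 0) => /=; lia.
Qed.

Lemma walk_tail_even n (x : n.-tuple bool) : odd n ->
  walk (tail_bits x) n.-1 = (2 * (n./2%:Z - (count (tail_bits x) (iota 0 n.-1))%:Z))%R.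
Proof. by move=> odd_n; rewrite /walk {1}(odd_half_pred odd_n); lia. Qed.

Lemma down_target_le_rank n (x : n.-tuple bool) :
  down_target (signed_excess x) <= rank (tail_bits x) n.-1 n.-1.
Proof.
have rank_eq := rankN (tail_bits x) n.-1.
have := count_unmatched_down (tail_bits x) n.-1.
have := prefix_min_le (tail_bits x) (leq0n n.-1); rewrite walk0.
have := prefix_min_le (tail_bits x) (leqnn n.-1).
rewrite /down_target /signed_excess; move: rank_eq.
set w := walk _ _; set a := count _ _; set r := rank _ _ _; set m := prefix_min _ _.
by case: (nth false x 0) => /=; case: ifP; lia.
Qed.

Lemma down_target_inj s s' :
  (s < 0)%R = (s' < 0)%R -> down_target s = down_target s' -> s = s'.
Proof. by rewrite /down_target; case: ifP; case: ifP => //= *; lia. Qed.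

Lemma down_target_dist s s' : down_target s - down_target s' + (down_target s' - down_target s)
  <= `|(s - s')%R|.
Proof. by rewrite /down_target; case: ifP; case: ifP; lia. Qed.

Lemma psi_inj n : odd n -> injective (@psi n).
Proof.
move=> odd_n x1 x2 eq_psi; have n_gt0 : 0 < n by case: n odd_n x1 x2 eq_psi.
set N := n.-1; set y1 := tail_bits x1; set y2 := tail_bits x2.
set s1 := signed_excess x1; set s2 := signed_excess x2.
have eq_sign : (s1 < 0)%R = (s2 < 0)%R by rewrite -!nth_psi0 // eq_psi.
have eq_out i : i < N -> rematch y1 N (down_target s1) i = rematch y2 N (down_target s2) i.
  by move=> lt_iN; rewrite -!nth_psiS ?eq_psi // -ltn_predRL.
have le_t1 := down_target_le_rank x1; have le_t2 := down_target_le_rank x2.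
have eq_s : s1 = s2 by apply: down_target_inj => //; apply: rematch_target_inj eq_out.
have eq_head : nth false x1 0 = nth false x2 0.
  move: eq_s; rewrite /s1 /s2 /signed_excess !walk_tail_even //.
  by case: (nth false x1 0); case: (nth false x2 0) => //=; lia.
have eq_W : walk y1 N = walk y2 N.
  by move: eq_s; rewrite /s1 /s2 /signed_excess eq_head -/N -/y1 -/y2; lia.
have eq_tail := rematch_inj le_t1 le_t2 eq_out eq_W.
apply: val_inj; apply: (@eq_from_nth _ false); rewrite ?size_tuple // => -[|i] lt_in //.
by apply: eq_tail; rewrite /N ltn_predRL.
Qed.

Lemma dist_psi n (x x' : n.-tuple bool) : 0 < n ->
  dist (psi x) (psi x') = ((signed_excess x < 0)%R != (signed_excess x' < 0)%R) +
    mismatches (rematch (tail_bits x) n.-1 (down_target (signed_excess x)))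
               (rematch (tail_bits x') n.-1 (down_target (signed_excess x'))) n.-1.
Proof.
move=> n_gt0; have iota_n : iota 0 n = 0 :: iota 1 n.-1 by rewrite -{1}(prednK n_gt0).
rewrite distE iota_n /= !nth_psi0 //; congr (_ + _).
rewrite -(addn0 1) iotaDl count_map; apply: eq_in_count => i.
by rewrite mem_iota add0n => /andP[_ lt_iN] /=; rewrite add1n !nth_psiS // -ltn_predRL.
Qed.

Lemma neighbor_tail_bounds y y' j N : j < N -> (forall i, i != j -> y i = y' i) ->
  [/\ mismatches (unmatched y N) (unmatched y' N) N <= 8, mismatches y y' N <= 1 &
      `|(walk y N - walk y' N)%R| <= 2].
Proof.
move=> lt_jN eq_off_j; have le1 := mismatches_le1 N eq_off_j.
case: (boolP (y' j == ~~ y j)) => [/eqP flip_j | same_j].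
  split; [exact: mismatches_unmatched_flip flip_j eq_off_j _ lt_jN | by [] |].
  by rewrite (walk_flip_gt flip_j eq_off_j lt_jN) /flip_shift; case: (y j); lia.
have eq_yy' i : i < N -> y i = y' i.
  move=> _; case: (eqVneq i j) => [->|/eq_off_j //].
  by move: same_j; case: (y j); case: (y' j).
by rewrite (mismatches_eq0 (eq_unmatched eq_yy')) (eq_walk_le eq_yy') ?subrr.
Qed.

Lemma dist_psi_neighbors n (x x' : n.-tuple bool) (p : 'I_n) : odd n ->
  (forall i, i != p -> tnth x i = tnth x' i) -> dist (psi x) (psi x') <= 28.
Proof.
move=> odd_n eq_off_p; have n_gt0 : 0 < n by case: n odd_n x x' p eq_off_p.
have eq_nth (i : nat) : i != p -> nth false x i = nth false x' i.
  case: (ltnP i n) => [lt_in|le_ni] ne_ip; last by rewrite !nth_default ?size_tuple.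
  by rewrite -!(tnth_nth _ _ (Ordinal lt_in)) eq_off_p.
set y := tail_bits x; set y' := tail_bits x'.
have [le_un le_tail le_s] : [/\ mismatches (unmatched y n.-1) (unmatched y' n.-1) n.-1 <= 8,
    mismatches y y' n.-1 <= 1 & `|(signed_excess x - signed_excess x')%R| <= 2].
  rewrite /signed_excess -/y -/y'; case: p eq_nth eq_off_p => -[|j] lt_pn /= eq_nth _.
    have eq_yy' i : y i = y' i by rewrite /y /y' /tail_bits eq_nth.
    rewrite (mismatches_eq0 (fun i _ => eq_yy' i)) (mismatches_eq0 (eq_unmatched (fun i _ => eq_yy' i))).
    rewrite (eq_in_walk (fun i _ => eq_yy' i)).
    by split=> //; case: (nth false x 0); case: (nth false x' 0); lia.
  have lt_jN : j < n.-1 by rewrite ltn_predRL.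
  have eq_off_j i : i != j -> y i = y' i by move=> ne_ij; rewrite /y /y' /tail_bits eq_nth.
  have [le_un le_tail le_W] := neighbor_tail_bounds lt_jN eq_off_j.
  by rewrite eq_nth //; split=> //; lia.
(* 28 = 1 (first coordinate) + 3 * 8 (unmatched set) + 1 (flipped bit) + 2 (target). *)
rewrite dist_psi // -/y -/y'; have := mismatches_rematch y y' n.-1
  (down_target (signed_excess x)) (down_target (signed_excess x')).
have := down_target_dist (signed_excess x) (signed_excess x').
by case: (_ != _); lia.
Qed.

Theorem theorem1 :
  exists C : nat, forall n : nat, odd n ->
    exists psi : n.-tuple bool -> n.-tuple bool,
      is_mapping (@Majority n) (@Dictator n) psi /\ Lipschitz C psi.
Proof.
exists 28 => n odd_n; exists (@psi n); split.
  split; first exact: injF_bij (psi_inj odd_n).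
  by move=> z; rewrite majority_excess // /Dictator nth_psi0 //; case: n odd_n z.
by apply: lipschitz_of_neighbors => x x' p; apply: dist_psi_neighbors.
Qed.
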